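(* Let $A,B:[0,T]\to\mathrm{Sym}(n)$ be continuous with $B(t)$ positive definite and $A(t)$ negative semidefinite for all $t\in[0,T]$, and consider the natural quadratic Hamiltonian $H(t,p,q)=\frac12\big[\langle B(t)p,p\rangle+\langle A(t)q,q\rangle\big]$ on $[0,T]\times\mathbb R^{2n}$. Let $\psi$ be the fundamental solution of the linear Hamiltonian system $z'=J_0\nabla H(t,z)$, i.e. $\psi'=J_0\,\mathrm{diag}(B(t),A(t))\,\psi$, $\psi(0)=\mathrm{Id}$. Let $L_0\in\Lambda(n)$, $\ell(t)=\psi(t)L_0$ and $\mathrm{mul}(t_0)=\dim(\ell(t_0)\cap L_D)$. Then the set of $t_0\in[0,T]$ with $\mathrm{mul}(t_0)>0$ is finite and $$\sum_{t_0\in[0,T]}\mathrm{mul}(t_0)\le n.$$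
   Context: The standard symplectic space is $\mathbb R^{2n}=\mathbb R^n\oplus\mathbb R^n$ with coordinates $z=(p,q)$ ($p$ momentum, $q$ configuration), $\omega_0((p_1,q_1),(p_2,q_2))=\langle p_1,q_2\rangle-\langle q_1,p_2\rangle$, $J_0(p,q)=(-q,p)$ so that $z'=J_0\nabla H$ means $p'=-\nabla_qH$, $q'=\nabla_pH$; $\Lambda(n)$ is the Lagrangian Grassmannian and $L_D=\mathbb R^n\times\{0\}=\{(p,0):p\in\mathbb R^n\}$ is the Dirichlet Lagrangian. $\mathrm{Sym}(n)$ denotes real symmetric $n\times n$ matrices. *)

From HB Require Import structures.
From mathcomp Require Import all_boot all_order all_algebra.
From mathcomp Require Import all_classical all_reals all_analysis.
Set Implicit Arguments. Unset Strict Implicit. Unset Printing Implicit Defensive.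
Import Order.TTheory GRing.Theory Num.Theory.
Local Open Scope ring_scope.

(* Vectors of R^{2n} are row vectors z = (p, q) : 'rV_(n + n),
   p = lsubmx z (momentum), q = rsubmx z (configuration).
   Linear maps (matrices M : 'M_(n+n)) act on column vectors, i.e. the image
   of the row vector z is  z *m M^T. Subspaces are row spaces (%MS). *)

Section SymplecticDefs.
Variables (R : realType) (n : nat).

Definition omega0 (z1 z2 : 'rV[R]_(n + n)) : R :=
  (lsubmx z1 *m (rsubmx z2)^T - rsubmx z1 *m (lsubmx z2)^T) 0 0.

Definition lagrangian (L : 'M[R]_(n + n)) : Prop :=
  \rank L = n /\
  forall u v : 'rV[R]_(n + n), (u <= L)%MS -> (v <= L)%MS -> omega0 u v = 0.

Definition J0 : 'M[R]_(n + n) := block_mx 0 (- 1%:M) 1%:M 0.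

Definition LD : 'M[R]_(n, n + n) := row_mx 1%:M 0.

Definition sym_mx (M : 'M[R]_n) : Prop := M^T = M.
Definition posdef_mx (M : 'M[R]_n) : Prop :=
  sym_mx M /\ forall v : 'rV[R]_n, v != 0 -> 0 < (v *m M *m v^T) 0 0.
Definition negsemidef_mx (M : 'M[R]_n) : Prop :=
  sym_mx M /\ forall v : 'rV[R]_n, (v *m M *m v^T) 0 0 <= 0.

End SymplecticDefs.

From HB Require Import structures.
From mathcomp Require Import all_boot all_order all_algebra.
From mathcomp Require Import all_classical all_reals all_analysis.
Import Order.TTheory GRing.Theory Num.Theory numFieldNormedType.Exports.
Local Open Scope ring_scope.
Local Open Scope classical_set_scope.

(* Points of R^{2n} are rows z = (p, q); x_u(t) = u psi(t)^T is the trajectory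
   of u, with momentum p_u(t) and configuration q_u(t). The proof rests on:
   (1) the flow is symplectic: omega0(x_u(t), x_w(t)) has zero derivative, as
       J0 diag(B, A) is infinitesimally symplectic; hence psi(t) is invertible;
   (2) the pairing h_u(t) = <p_u(t), q_u(t)> is nondecreasing, its derivative
       being <B p, p> - <A q, q> >= 0; and if h_u(a) = h_u(b), a < b, with
       q_u(b) = 0, then p_u = 0 on ]a, b[, q_u is frozen there, and u = 0.
   The crossing space K(t) = { u in L0 | q_u(t) = 0 } has rank mul(t). As L0
   is Lagrangian, h_{w+v}(t) = h_v(t) for w in K(t), v in L0, and h_w(t) = 0.
   By induction over increasing times, h_u(t) < 0 for every nonzero u in the
   sum of the K(t') with t' > t; so crossing spaces at distinct times form a
   direct sum inside L0, and any finite sum of multiplicities is <= rank L0 = n.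
   A property whose duplicate-free witness lists are all that short holds at
   finitely many points, which gives the theorem. *)

Section RealCalculus.
Variable R : realType.

Lemma within_continuous_sum (S : set R) (I : Type) (r : seq I)
    (f : I -> R -> R) :
  (forall i, {within S, continuous (f i)}) ->
  {within S, continuous (fun s => \sum_(i <- r) f i s)}.
Proof.
move=> hf x; apply: cvg_big => // [|i _]; first exact: add_continuous.
exact: hf.
Qed.

Lemma is_derive_sum_pointwise m (h : 'I_m -> R -> R) (t : R) (dh : 'I_m -> R) :
  (forall i, is_derive t 1 (h i) (dh i)) ->
  is_derive t 1 (fun s => \sum_i h i s) (\sum_i dh i).
Proof.
move=> hh; have -> : (fun s => \sum_i h i s) = \sum_i h i.
  by apply/funext => s; rewrite fct_sumE.
exact: is_derive_sum.
Qed.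

Lemma derive0_constant_cc (f : R -> R) (a b : R) : a <= b ->
  (forall x, x \in `]a, b[%R -> is_derive x 1 f 0) ->
  {within `[a, b], continuous f} -> f b = f a.
Proof.
move=> ab hd hc; have [c _] := MVT_segment ab hd hc.
by rewrite mul0r => /eqP; rewrite subr_eq0 => /eqP.
Qed.

End RealCalculus.

Section BilinearForms.
Variables (R : realType) (N : nat).

Lemma bilinear_formE (a b : 'rV[R]_N) (G : 'M[R]_N) :
  (a *m G *m b^T) 0 0 = \sum_j (\sum_l a 0 l * G l j) * b 0 j.
Proof. by rewrite mxE; apply: eq_bigr => j _; rewrite !mxE. Qed.

Lemma bilinear_form_derive (a b : R -> 'rV[R]_N) (da db : 'rV[R]_N)
    (G : 'M[R]_N) (t : R) :
  (forall j, is_derive t 1 (fun s => a s 0 j) (da 0 j)) ->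
  (forall j, is_derive t 1 (fun s => b s 0 j) (db 0 j)) ->
  is_derive t 1 (fun s => (a s *m G *m (b s)^T) 0 0)
    ((da *m G *m (b t)^T + a t *m G *m db^T) 0 0).
Proof.
move=> ha hb.
have -> : (fun s => (a s *m G *m (b s)^T) 0 0) =
    (fun s => \sum_j (\sum_l a s 0 l * G l j) * b s 0 j).
  by apply/funext => s; rewrite bilinear_formE.
apply: is_derive_eq.
  apply: is_derive_sum_pointwise => j; apply: is_deriveM (hb j).
  apply: is_derive_sum_pointwise => l; exact: is_deriveM (ha l) (is_derive_cst _ _ _).
rewrite mxE !bilinear_formE -big_split /=; apply: eq_bigr => j _.
rewrite addrC; congr (_ + _) => //; rewrite [LHS]mulrC; congr (_ * _).
by apply: eq_bigr => l _; rewrite scaler0 add0r mulrC.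
Qed.

Lemma bilinear_form_continuous (S : set R) (a b : R -> 'rV[R]_N)
    (G : 'M[R]_N) :
  (forall j, {within S, continuous (fun s => a s 0 j)}) ->
  (forall j, {within S, continuous (fun s => b s 0 j)}) ->
  {within S, continuous (fun s => (a s *m G *m (b s)^T) 0 0)}.
Proof.
move=> ha hb.
have -> : (fun s => (a s *m G *m (b s)^T) 0 0) =
    (fun s => \sum_j (\sum_l a s 0 l * G l j) * b s 0 j).
  by apply/funext => s; rewrite bilinear_formE.
apply: within_continuous_sum => j x; apply: continuousM; last exact: hb.
apply: within_continuous_sum => l y; apply: continuousM; first exact: ha.
exact: cst_continuous.
Qed.

End BilinearForms.

Section SymplecticAlgebra.
Variables (R : realType) (n : nat).
Implicit Types (p q r s : 'rV[R]_n) (Bm Am : 'M[R]_n).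

Definition omega_mx : 'M[R]_(n + n) := block_mx 0 1%:M (- 1%:M) 0.

Definition pairing_mx : 'M[R]_(n + n) := block_mx 0 1%:M 0 0.

Definition ham_velocity Bm Am p q : 'rV[R]_(n + n) :=
  row_mx (- (q *m Am)) (p *m Bm).

Lemma mul_row_omega_mx p q : row_mx p q *m omega_mx = row_mx (- q) p.
Proof.
by rewrite mul_row_block !mulmx0 !mulmx1 mulmxN mulmx1 add0r addr0.
Qed.

Lemma mul_row_pairing_mx p q : row_mx p q *m pairing_mx = row_mx 0 p.
Proof. by rewrite mul_row_block !mulmx0 !mulmx1 !addr0. Qed.

Lemma row_mx_dot p q r s :
  row_mx p q *m (row_mx r s)^T = p *m r^T + q *m s^T.
Proof. by rewrite tr_row_mx mul_row_col. Qed.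

Lemma omega0E (u v : 'rV[R]_(n + n)) : omega0 u v = (u *m omega_mx *m v^T) 0 0.
Proof.
rewrite /omega0 -[u in RHS]hsubmxK -[v in RHS]hsubmxK mul_row_omega_mx.
by rewrite row_mx_dot mulNmx addrC.
Qed.

Lemma hamiltonian_mx_action p q Bm Am : Bm^T = Bm -> Am^T = Am ->
  row_mx p q *m (J0 R n *m block_mx Bm 0 0 Am)^T = ham_velocity Bm Am p q.
Proof.
move=> symB symA; have trN1 : (- 1%:M : 'M[R]_n)^T = - 1%:M.
  by rewrite linearN /= trmx1.
rewrite trmx_mul /J0 !tr_block_mx symB symA !trmx0 trN1 trmx1.
rewrite mulmxA mul_row_block !mulmx0 !addr0 !add0r mul_row_block.
by rewrite !mulmx0 !mulmxN !mulmx1 !addr0 add0r.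
Qed.

Lemma omega_ham_velocity_skew p q r s Bm Am : Bm^T = Bm -> Am^T = Am ->
  ham_velocity Bm Am p q *m omega_mx *m (row_mx r s)^T +
  row_mx p q *m omega_mx *m (ham_velocity Bm Am r s)^T = 0.
Proof.
move=> symB symA; rewrite !mul_row_omega_mx !row_mx_dot linearN /=.
rewrite !trmx_mul symA symB !mulNmx !mulmxN opprK !mulmxA -opprD addrC.
by rewrite [X in X - _]addrC subrr.
Qed.

Lemma pairing_ham_velocity p q Bm Am : Bm^T = Bm ->
  ham_velocity Bm Am p q *m pairing_mx *m (row_mx p q)^T +
  row_mx p q *m pairing_mx *m (ham_velocity Bm Am p q)^T =
  p *m Bm *m p^T - q *m Am *m q^T.
Proof.
move=> symB; rewrite !mul_row_pairing_mx !row_mx_dot !mul0mx !add0r.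
by rewrite trmx_mul symB mulmxA mulNmx addrC.
Qed.

Lemma sub_LD (v : 'rV[R]_(n + n)) : (v <= LD R n)%MS = (rsubmx v == 0).
Proof.
apply/idP/eqP => [/submxP[D ->]|q0].
  by rewrite mul_mx_row mulmx1 mulmx0 row_mxKr.
apply/submxP; exists (lsubmx v).
by rewrite mul_mx_row mulmx1 mulmx0 -q0 hsubmxK.
Qed.

End SymplecticAlgebra.
Arguments ham_velocity {R n}.

Section HamiltonianFlow.
Variables (R : realType) (n : nat) (T : R) (A B : R -> 'M[R]_n)
  (psi : R -> 'M[R]_(n + n)).
Hypothesis B_posdef : forall t, 0 <= t <= T -> posdef_mx (B t).
Hypothesis A_negsemidef : forall t, 0 <= t <= T -> negsemidef_mx (A t).
Hypothesis psi0 : psi 0 = 1%:M.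
Hypothesis psi_continuous :
  forall i j, {within `[0, T], continuous (fun t => psi t i j)}.
Hypothesis psi_derive : forall t, 0 < t < T -> forall i j,
  is_derive t 1 (fun s => psi s i j)
    ((J0 R n *m block_mx (B t) 0 0 (A t) *m psi t) i j).

Definition flow (u : 'rV[R]_(n + n)) t := u *m (psi t)^T.
Definition mom u t := lsubmx (flow u t).
Definition conf u t := rsubmx (flow u t).
Definition velocity u t := ham_velocity (B t) (A t) (mom u t) (conf u t).

Lemma flowE u t : flow u t = row_mx (mom u t) (conf u t).
Proof. by rewrite hsubmxK. Qed.

Lemma B_sym t : 0 <= t <= T -> (B t)^T = B t.
Proof. by case/B_posdef. Qed.

Lemma A_sym t : 0 <= t <= T -> (A t)^T = A t.
Proof. by case/A_negsemidef. Qed.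

Lemma itv_oo_open {a b t : R} :
  0 <= a -> b <= T -> t \in `]a, b[%R -> 0 < t < T.
Proof.
move=> a0 bT; rewrite in_itv /= => /andP[lt_at lt_tb].
by rewrite (le_lt_trans a0 lt_at) (lt_le_trans lt_tb bT).
Qed.

Lemma itv_oo_closed {a b t : R} :
  0 <= a -> b <= T -> t \in `]a, b[%R -> 0 <= t <= T.
Proof. by move=> a0 bT /(itv_oo_open a0 bT) /andP[/ltW -> /ltW ->]. Qed.

Lemma itv_cc_sub {a b : R} : 0 <= a -> b <= T -> `[a, b] `<=` `[0, T].
Proof.
move=> a0 bT x /=; rewrite !in_itv /= => /andP[ax xb].
by rewrite (le_trans a0 ax) (le_trans xb bT).
Qed.

Lemma flow_coordE u t j : flow u t 0 j = \sum_k u 0 k * psi t j k.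
Proof. by rewrite mxE; apply: eq_bigr => k _; rewrite mxE. Qed.

Lemma flow_continuous u j :
  {within `[0, T], continuous (fun s => flow u s 0 j)}.
Proof.
have -> : (fun s => flow u s 0 j) = (fun s => \sum_k u 0 k * psi s j k).
  by apply/funext => s; rewrite flow_coordE.
apply: within_continuous_sum => k x; apply: continuousM.
  exact: cst_continuous.
exact: psi_continuous.
Qed.

Lemma flow_derive u t j : 0 < t < T ->
  is_derive t 1 (fun s => flow u s 0 j) (velocity u t 0 j).
Proof.
move=> t_in; have t_cc : 0 <= t <= T by case/andP: t_in => /ltW -> /ltW ->.
have -> : (fun s => flow u s 0 j) = (fun s => \sum_k u 0 k * psi s j k).
  by apply/funext => s; rewrite flow_coordE.
apply: is_derive_eq.
  apply: is_derive_sum_pointwise => k.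
  have cst_derive : is_derive t 1 (fun _ : R => u 0 k) 0 := is_derive_cst _ _ _.
  exact: is_deriveM cst_derive (psi_derive _ t_in j k).
rewrite /velocity -hamiltonian_mx_action ?B_sym ?A_sym // -flowE /flow.
rewrite -[in RHS]mulmxA -trmx_mul [RHS]mxE; apply: eq_bigr => k _.
by rewrite [in RHS]mxE scaler0 addr0.
Qed.

Lemma flow_form_derive u w (G : 'M[R]_(n + n)) t : 0 < t < T ->
  is_derive t 1 (fun s => (flow u s *m G *m (flow w s)^T) 0 0)
    ((velocity u t *m G *m (flow w t)^T +
      flow u t *m G *m (velocity w t)^T) 0 0).
Proof. by move=> t_in; apply: bilinear_form_derive => j; apply: flow_derive. Qed.

Lemma flow_form_continuous (S : set R) u w (G : 'M[R]_(n + n)) :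
  S `<=` `[0, T] ->
  {within S, continuous (fun s => (flow u s *m G *m (flow w s)^T) 0 0)}.
Proof.
move=> sub; apply: (continuous_subspaceW sub).
by apply: bilinear_form_continuous => j; exact: flow_continuous.
Qed.

Lemma omega_flow u w t : 0 <= t <= T ->
  omega0 (flow u t) (flow w t) = omega0 u w.
Proof.
case/andP=> t0 tT; rewrite !omega0E.
have -> : (u *m omega_mx R n *m w^T) 0 0 =
    (flow u 0 *m omega_mx R n *m (flow w 0)^T) 0 0.
  by rewrite /flow psi0 trmx1 !mulmx1.
apply: (@derive0_constant_cc R
  (fun s => (flow u s *m omega_mx R n *m (flow w s)^T) 0 0) _ _ t0).
  move=> x x_in; apply: is_derive_eq.
    exact: flow_form_derive (itv_oo_open (lexx 0) tT x_in).
  have x_cc := itv_oo_closed (lexx 0) tT x_in.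
  by rewrite /velocity !flowE omega_ham_velocity_skew ?B_sym ?A_sym ?mxE.
exact: flow_form_continuous (itv_cc_sub (lexx 0) tT).
Qed.

(* A trajectory vanishing at some time is trivial: it stays omega0-orthogonal
   to every initial point. *)
Lemma flow_eq0 u t : 0 <= t <= T -> flow u t = 0 -> u = 0.
Proof.
move=> t_cc u0.
have uW : u *m omega_mx R n = 0.
  apply/rowP => j; have := omega_flow u (delta_mx 0 j) t t_cc.
  rewrite u0 !omega0E !mul0mx trmx_delta -colE [in LHS]mxE [in RHS]mxE => <-.
  by rewrite mxE.
move: uW; rewrite -(hsubmxK u) mul_row_omega_mx -row_mx0 => /eq_row_mx[qu ->].
by rewrite -[rsubmx u]opprK qu oppr0.
Qed.

Lemma psi_unitmx t : 0 <= t <= T -> (psi t)^T \in unitmx.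
Proof.
move=> t_cc; rewrite -row_free_unit -kermx_eq0; apply/eqP/row_matrixP => i.
rewrite row0; apply: (flow_eq0 _ _ t_cc).
by rewrite /flow -row_mul mulmx_ker row0.
Qed.

Definition pairing u t := (mom u t *m (conf u t)^T) 0 0.
Definition pairing_slope u t :=
  (mom u t *m B t *m (mom u t)^T) 0 0 - (conf u t *m A t *m (conf u t)^T) 0 0.

Lemma pairingE u :
  pairing u = (fun s => (flow u s *m pairing_mx R n *m (flow u s)^T) 0 0).
Proof.
by apply/funext => s; rewrite flowE mul_row_pairing_mx row_mx_dot mul0mx add0r.
Qed.

Lemma pairing_derive u t : 0 < t < T ->
  is_derive t 1 (pairing u) (pairing_slope u t).
Proof.
move=> t_in; have t_cc : 0 <= t <= T by case/andP: t_in => /ltW -> /ltW ->.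
rewrite pairingE; apply: is_derive_eq; first exact: flow_form_derive.
by rewrite flowE pairing_ham_velocity ?B_sym // mxE [X in _ + X]mxE.
Qed.

Lemma pairing_slope_gt0 u t : 0 <= t <= T -> mom u t != 0 ->
  0 < pairing_slope u t.
Proof.
move=> t_cc mom_nz; rewrite subr_gt0.
case: (B_posdef _ t_cc) => _ /(_ _ mom_nz); apply: le_lt_trans.
by case: (A_negsemidef _ t_cc) => _ ->.
Qed.

Lemma pairing_slope_ge0 u t : 0 <= t <= T -> 0 <= pairing_slope u t.
Proof.
move=> t_cc; have [mom0|] := eqVneq (mom u t) 0; last first.
  by move/(pairing_slope_gt0 _ _ t_cc)/ltW.
rewrite /pairing_slope mom0 !mul0mx mxE sub0r oppr_ge0.
by case: (A_negsemidef _ t_cc) => _ ->.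
Qed.

Lemma pairing_nondecreasing u {a b : R} : 0 <= a -> a <= b -> b <= T ->
  pairing u a <= pairing u b.
Proof.
move=> a0 ab bT.
have a_in : a \in `[0, T]%R by rewrite in_itv /= a0 (le_trans ab bT).
have b_in : b \in `[0, T]%R by rewrite in_itv /= bT (le_trans a0 ab).
have hd x (x_in : x \in `]0, T[%R) :=
  pairing_derive u _ (itv_oo_open (lexx 0) (lexx T) x_in).
apply: (ger0_derive1_le_cc _ _ _ a_in b_in ab).
- by move=> x x_in; exact: (@ex_derive _ _ _ _ _ _ _ (hd x x_in)).
- move=> x x_in; rewrite derive1E (@derive_val _ _ _ _ _ _ _ (hd x x_in)).
  exact: pairing_slope_ge0 (itv_oo_closed (lexx 0) (lexx T) x_in).
- by rewrite pairingE; exact: flow_form_continuous.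
Qed.

Lemma mom0_of_pairing_const u {a b : R} : 0 <= a -> a < b -> b <= T ->
  pairing u a = pairing u b -> forall x, x \in `]a, b[%R -> mom u x = 0.
Proof.
move=> a0 ab bT eq_ab.
have hd y (y_in : y \in `]a, b[%R) :=
  pairing_derive u _ (itv_oo_open a0 bT y_in).
have pairing_cst y : y \in `]a, b[%R -> pairing u y = pairing u a.
  rewrite in_itv /= => /andP[ay yb]; apply/eqP; rewrite eq_le.
  rewrite (pairing_nondecreasing u a0 (ltW ay) (le_trans (ltW yb) bT)) andbT.
  rewrite eq_ab.
  exact: (pairing_nondecreasing u (le_trans a0 (ltW ay)) (ltW yb) bT).
move=> x x_in; have [//|mom_nz] := eqVneq (mom u x) 0.
have d0 : is_derive x 1 (pairing u) 0.
  apply: (derive1_at_max (ltW ab) _ x_in) => [y y_in|y y_in].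
    exact: (@ex_derive _ _ _ _ _ _ _ (hd y y_in)).
  by rewrite (pairing_cst _ y_in) (pairing_cst _ x_in).
have := pairing_slope_gt0 _ _ (itv_oo_closed a0 bT x_in) mom_nz.
rewrite -(@derive_val _ _ _ _ _ _ _ (hd x x_in)).
by rewrite (@derive_val _ _ _ _ _ _ _ d0) ltxx.
Qed.

(* Where the momentum vanishes, the configuration is frozen (q' = B p). *)
Lemma conf_const_of_mom0 u x b : 0 <= x -> x <= b -> b <= T ->
  (forall y, y \in `]x, b[%R -> mom u y = 0) -> conf u x = conf u b.
Proof.
move=> x0 xb bT mom0; apply/rowP => j; rewrite [LHS]mxE [RHS]mxE; symmetry.
apply: (@derive0_constant_cc R (fun s => flow u s 0 (rshift n j)) _ _ xb).
  move=> y y_in; apply: is_derive_eq.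
    exact: flow_derive (itv_oo_open x0 bT y_in).
  by rewrite /velocity /ham_velocity row_mxEr (mom0 _ y_in) !mul0mx mxE.
exact: continuous_subspaceW (itv_cc_sub x0 bT) (flow_continuous _ _).
Qed.

Lemma pairing_strict u a b : 0 <= a -> a < b -> b <= T ->
  pairing u a = pairing u b -> conf u b = 0 -> u = 0.
Proof.
move=> a0 ab bT eq_ab conf_b0; set m := (a + b) / 2.
have m_in : m \in `]a, b[%R := mid_in_itvoo ab.
have m_cc := itv_oo_closed a0 bT m_in.
have mom0 := mom0_of_pairing_const u a0 ab bT eq_ab.
have conf_m0 : conf u m = 0.
  rewrite -conf_b0; apply: conf_const_of_mom0 => [|||y y_in].
  - by case/andP: m_cc.
  - by move: m_in; rewrite in_itv /= => /andP[_ /ltW].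
  - exact: bT.
  apply: mom0; move: m_in y_in; rewrite !in_itv /= => /andP[am _] /andP[my ->].
  by rewrite (lt_trans am my).
by apply: (flow_eq0 _ _ m_cc); rewrite flowE (mom0 _ m_in) conf_m0 row_mx0.
Qed.

Variable L0 : 'M[R]_(n + n).
Hypothesis L0_lagrangian : lagrangian L0.

(* The crossing space at t: the initial data in L0 whose trajectory lies in
   L_D at time t, i.e. psi(t)^-1 (l(t) /\ L_D). Its rank is mul(t). *)
Definition crossing_space t :=
  (((L0 *m (psi t)^T) :&: LD R n)%MS *m invmx ((psi t)^T)).

Lemma crossing_spaceP t z : 0 <= t <= T ->
  (z <= crossing_space t)%MS = (z <= L0)%MS && (conf z t == 0).
Proof.
move=> t_cc.
have psi_free : row_free (psi t)^T by rewrite row_free_unit psi_unitmx.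
rewrite -(submxMfree z _ psi_free) /crossing_space -mulmxA.
rewrite mulVmx ?psi_unitmx //.
by rewrite mulmx1 sub_capmx (submxMfree _ _ psi_free) sub_LD.
Qed.

Lemma rank_crossing_space t : 0 <= t <= T ->
  \rank (crossing_space t) = \rank ((L0 *m (psi t)^T) :&: LD R n)%MS.
Proof.
move=> t_cc; apply: mxrankMfree.
by rewrite row_free_unit unitmx_inv psi_unitmx.
Qed.

Lemma crossing_space_sub t : 0 <= t <= T -> (crossing_space t <= L0)%MS.
Proof.
move=> t_cc; apply/row_subP => i.
by have := row_sub i (crossing_space t); rewrite crossing_spaceP // => /andP[].
Qed.

Lemma pairing_crossing0 u t : 0 <= t <= T -> (u <= crossing_space t)%MS ->
  pairing u t = 0.
Proof.
move=> t_cc; rewrite crossing_spaceP // /pairing => /andP[_ /eqP->].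
by rewrite trmx0 mulmx0 mxE.
Qed.

(* Since L0 is Lagrangian and the flow symplectic, omega0(x_w(t), x_v(t)) = 0
   for w, v in L0; when q_w(t) = 0 this reads <p_w(t), q_v(t)> = 0, so adding
   an element of the crossing space does not change the pairing at t. *)
Lemma pairing_add_crossing w v t : 0 <= t <= T ->
  (w <= crossing_space t)%MS -> (v <= L0)%MS ->
  pairing (w + v) t = pairing v t.
Proof.
move=> t_cc w_in v_in.
move: (w_in); rewrite crossing_spaceP // => /andP[wL /eqP q0].
have orth : omega0 (flow w t) (flow v t) = 0.
  by rewrite omega_flow //; case: L0_lagrangian => _ ->.
rewrite /omega0 -/(mom w t) -/(conf w t) -/(mom v t) -/(conf v t) q0 in orth.
rewrite mul0mx subr0 in orth.
have momD : mom (w + v) t = mom w t + mom v t.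
  by rewrite /mom /flow mulmxDl linearD.
have confD : conf (w + v) t = conf w t + conf v t.
  by rewrite /conf /flow mulmxDl linearD.
by rewrite /pairing momD confD q0 add0r mulmxDl mxE orth add0r.
Qed.

Definition crossings_sum (s : seq R) := (\sum_(t <- s) crossing_space t)%MS.

Lemma crossings_sum_sub s : {in s, forall x, 0 <= x <= T} ->
  (crossings_sum s <= L0)%MS.
Proof.
rewrite /crossings_sum; elim: s => [|x s IH] s_in.
  by rewrite big_nil sub0mx.
rewrite big_cons addsmx_sub crossing_space_sub ?s_in ?mem_head //=.
by apply: IH => y y_s; apply: s_in; rewrite in_cons y_s orbT.
Qed.

(* By induction on k: write
   u = w + v with w in K(t1), v in the later spaces; then
   h_u(t) <= h_u(t1) = h_v(t1), and h_v(t1) < 0 by induction, unless v = 0,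
   where h_u(t1) = 0 and equality h_u(t) = h_u(t1) would force u = 0. *)
Lemma pairing_neg_before_crossings s : sorted <%R s ->
  {in s, forall x, 0 <= x <= T} ->
  forall t u, 0 <= t -> {in s, forall x, t < x} ->
  (u <= crossings_sum s)%MS -> u != 0 -> pairing u t < 0.
Proof.
elim: s => [|t1 s IH] s_sorted s_in t u t0 s_gt u_in u_nz.
  by move: u_in; rewrite /crossings_sum big_nil submx0 (negbTE u_nz).
have t1_cc : 0 <= t1 <= T by apply: s_in; rewrite mem_head.
have t_t1 : t < t1 by apply: s_gt; rewrite mem_head.
have s_in' : {in s, forall x, 0 <= x <= T}.
  by move=> x x_s; apply: s_in; rewrite in_cons x_s orbT.
have s_gt1 : {in s, forall x, t1 < x}.
  by apply/allP; apply: (order_path_min lt_trans s_sorted).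
move: u_in; rewrite /crossings_sum big_cons => /sub_addsmxP[[a1 a2] /= u_def].
set w := a1 *m _ in u_def; set v := a2 *m _ in u_def.
have w_in : (w <= crossing_space t1)%MS by apply: submxMl.
have v_in : (v <= crossings_sum s)%MS by apply: submxMl.
have v_L0 : (v <= L0)%MS := submx_trans v_in (crossings_sum_sub _ s_in').
have mono : pairing u t <= pairing u t1.
  by case/andP: t1_cc => _ t1T; apply: pairing_nondecreasing => //; apply: ltW.
have shift : pairing u t1 = pairing v t1 by rewrite u_def pairing_add_crossing.
have [v0|v_nz] := eqVneq v 0; last first.
  apply: (le_lt_trans mono); rewrite shift.
  apply: IH (path_sorted s_sorted) s_in' _ _ _ s_gt1 v_in v_nz.
  exact: le_trans t0 (ltW t_t1).
have pairing_t1 : pairing u t1 = 0.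
  by rewrite shift v0 pairing_crossing0 ?sub0mx.
rewrite lt_neqAle -pairing_t1 mono andbT; apply: contra u_nz => /eqP eq_t_t1.
have conf_t1 : conf u t1 = 0.
  move: w_in; rewrite -[w]addr0 -v0 -u_def crossing_spaceP //.
  by case/andP=> _ /eqP.
apply/eqP; case/andP: t1_cc => _ t1T.
exact: pairing_strict t0 t_t1 t1T eq_t_t1 conf_t1.
Qed.

Lemma rank_crossings_sum s : sorted <%R s -> {in s, forall x, 0 <= x <= T} ->
  \rank (crossings_sum s) = (\sum_(t <- s) \rank (crossing_space t))%N.
Proof.
rewrite /crossings_sum; elim: s => [|t1 s IH] s_sorted s_in.
  by rewrite !big_nil mxrank0.
have t1_cc : 0 <= t1 <= T by apply: s_in; rewrite mem_head.
have s_in' : {in s, forall x, 0 <= x <= T}.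
  by move=> x x_s; apply: s_in; rewrite in_cons x_s orbT.
have s_gt1 : {in s, forall x, t1 < x}.
  by apply/allP; apply: (order_path_min lt_trans s_sorted).
have cap0 : (crossing_space t1 :&: crossings_sum s)%MS = 0.
  apply/eqP; rewrite -submx0; apply/row_subP => i; set r := row i _.
  have : (r <= crossing_space t1 :&: crossings_sum s)%MS by apply: row_sub.
  rewrite sub_capmx => /andP[r_t1 r_s]; have [->|r_nz] := eqVneq r 0.
    by rewrite sub0mx.
  have := pairing_neg_before_crossings s (path_sorted s_sorted) s_in' t1 r
    (proj1 (andP t1_cc)) s_gt1 r_s r_nz.
  by rewrite pairing_crossing0 ?ltxx.
rewrite !big_cons -/(crossings_sum s).
have := mxrank_sum_cap (crossing_space t1) (crossings_sum s).
by rewrite cap0 mxrank0 addn0 => ->; rewrite (IH (path_sorted s_sorted) s_in').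
Qed.

Lemma sum_crossing_ranks_le s : uniq s -> {in s, forall x, 0 <= x <= T} ->
  (\sum_(t <- s) \rank ((L0 *m (psi t)^T) :&: LD R n)%MS <= n)%N.
Proof.
move=> s_uniq s_in; set s' := sort <=%O s.
have s'_perm : perm_eq s' s by rewrite perm_sort.
have s'_in : {in s', forall x, 0 <= x <= T}.
  by move=> x; rewrite (perm_mem s'_perm); apply: s_in.
rewrite -(perm_big _ s'_perm) big_seq.
rewrite (eq_bigr (fun t => \rank (crossing_space t))) => [|t t_s']; last first.
  by rewrite rank_crossing_space ?s'_in.
rewrite -big_seq -rank_crossings_sum ?sort_lt_sorted //.
case: L0_lagrangian => rankL0 _; rewrite -[X in (_ <= X)%N]rankL0.
by rewrite mxrankS // crossings_sum_sub.
Qed.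

End HamiltonianFlow.

Lemma bounded_enumeration (X : eqType) (P : X -> Prop) (k : nat) :
  (forall s : seq X, uniq s -> {in s, forall x, P x} -> (size s <= k)%N) ->
  exists s : seq X, uniq s /\ forall x, x \in s <-> P x.
Proof.
move=> bound; apply: contrapT => no_enum.
have grow m : exists s, [/\ uniq s, {in s, forall x, P x} & size s = m].
  elim: m => [|m [s [s_uniq s_P s_size]]]; first by exists [::].
  have [x [Px x_s]] : exists x, P x /\ x \notin s.
    apply: contrapT => none; apply: no_enum; exists s; split=> // x.
    split=> [/s_P //|Px]; apply: contrapT => x_s.
    by apply: none; exists x; split=> //; apply/negP.
  exists (x :: s); split=> /=; [by rewrite x_s s_uniq| |by rewrite s_size].
  by move=> y; rewrite in_cons => /predU1P[->|/s_P].
have [s [s_uniq s_P s_size]] := grow k.+1.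
by have := bound s s_uniq s_P; rewrite s_size ltnn.
Qed.

Theorem theorem3p9 (R : realType) (n : nat) (T : R)
  (A B : R -> 'M[R]_n) (psi : R -> 'M[R]_(n + n)) (L0 : 'M[R]_(n + n)) :
  (forall i j, {within `[0, T]%classic, continuous (fun t => A t i j)}) ->
  (forall i j, {within `[0, T]%classic, continuous (fun t => B t i j)}) ->
  (forall t, 0 <= t <= T -> posdef_mx (B t)) ->
  (forall t, 0 <= t <= T -> negsemidef_mx (A t)) ->
  (* psi is the fundamental solution: psi(0) = Id, psi continuous on [0,T],
     psi' = J0 diag(B(t), A(t)) psi on ]0,T[ *)
  psi 0 = 1%:M ->
  (forall i j, {within `[0, T]%classic, continuous (fun t => psi t i j)}) ->
  (forall t, 0 < t < T -> forall i j,
      is_derive t 1 (fun s => psi s i j)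
        ((J0 R n *m block_mx (B t) 0 0 (A t) *m psi t) i j)) ->
  lagrangian L0 ->
  let mul t := \rank ((L0 *m (psi t)^T) :&: LD R n)%MS in
  exists s : seq R,
    [/\ uniq s,
        (forall t, t \in s <-> (0 <= t <= T /\ (0 < mul t)%N)) &
        (\sum_(t <- s) mul t <= n)%N].
Proof.
move=> _ _ B_pd A_nsd psi0 psi_cont psi_der L0_lag mul.
have sum_le := @sum_crossing_ranks_le R n T A B psi
  B_pd A_nsd psi0 psi_cont psi_der L0 L0_lag.
have [s [s_uniq s_P]] :
    exists s, uniq s /\ forall t, t \in s <-> (0 <= t <= T /\ (0 < mul t)%N).
  apply: (@bounded_enumeration _ _ n) => s s_uniq s_P.
  apply: leq_trans (sum_le s s_uniq (fun t t_s => proj1 (s_P t t_s))).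
  rewrite -sum1_size big_seq [leqRHS]big_seq; apply: leq_sum => t t_s.
  exact: proj2 (s_P t t_s).
by exists s; split=> //; apply: sum_le => // t /s_P[].
Qed.
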